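(* Let $(\rho_t)_{t\ge0}$ be a gradient flow solution of the Granular-Medium equation. For any $x,y\in\mathbb{T}^d$ and $t,h>0$, with $B=|\nabla V|_2+|\nabla W|_2$, \[D_\rho(x,y;t,h)\le\left(\frac{d(x,y)}{2\sqrt h}+\frac12\sqrt h\,B\right)^2.\]
   Context: $\mathbb{T}^d=\mathbb{R}^d/\mathbb{Z}^d$ with flat distance $d(x,y)$. $V,W\in C^{2,1}(\mathbb{T}^d)$; for a vector field $U$, $|U|_2=\sup_x|U(x)|$ (Euclidean norm). $W*\rho(x)=\int W(x-y)d\rho(y)$. The Granular-Medium equation is $\partial_t\rho_t=\Delta\rho_t+\nabla\cdot(\rho_t\nabla V+\rho_t\nabla W*\rho_t)$, and gradient flow solutions are Ambrosio–Gigli–Savaré gradient flows of $\mathcal{F}[\rho]=\int\rho\log\rho+\int Vd\rho+\int W*\rho\,d\rho$ in $(\mathcal{P}(\mathbb{T}^d),W_2)$. Lagrangian: $\mathcal{L}_\rho(p,x,t)=\frac14|p+\nabla V(x)+\nabla W*\rho_t(x)|^2$; cost $D_\rho(x,y;t,h)=\inf\{\int_t^{t+h}\mathcal{L}_\rho(\dot\gamma_s,\gamma_s,s)ds:\gamma\in AC_2([t,t+h];\mathbb{T}^d),\gamma_t=x,\gamma_{t+h}=y\}$. *)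

From HB Require Import structures.
From mathcomp Require Import all_boot all_order all_algebra.
From mathcomp Require Import all_classical all_reals all_analysis.
Set Implicit Arguments. Unset Strict Implicit. Unset Printing Implicit Defensive.
Import Order.TTheory GRing.Theory Num.Theory.
Import numFieldNormedType.Exports.
Local Open Scope classical_set_scope.
Local Open Scope ring_scope.

(* Points of R^d are row vectors 'rV[R]_d; the torus T^d = R^d / Z^d is
   represented through Z^d-periodic objects on R^d. *)

Definition enorm {R : realType} {d : nat} (v : 'rV[R]_d) : R :=
  Num.sqrt (\sum_(i < d) v ord0 i ^+ 2).

Definition int_vec {R : realType} {d : nat} (k : 'rV[R]_d) : Prop :=
  forall i : 'I_d, k ord0 i \is a Num.int.

Definition torus_dist {R : realType} {d : nat} (x y : 'rV[R]_d) : R :=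
  inf [set enorm (x - y - k) | k in [set k : 'rV[R]_d | int_vec k]].

Definition zperiodic {R : realType} {d : nat} (f : 'rV[R]_d -> R) : Prop :=
  forall x k, int_vec k -> f (x + k) = f x.

Definition ev {R : realType} {d : nat} (i : 'I_d) : 'rV[R]_d := delta_mx ord0 i.

Definition pder {R : realType} {d : nat} (i : 'I_d) (f : 'rV[R]_d -> R)
  : 'rV[R]_d -> R := fun x => 'D_(ev i) f x.

Definition grad {R : realType} {d : nat} (f : 'rV[R]_d -> R) (x : 'rV[R]_d)
  : 'rV[R]_d := \row_i pder i f x.

Definition C21 {R : realType} {d : nat} (f : 'rV[R]_d -> R) : Prop :=
  (forall x, differentiable f x) /\
  (forall (i : 'I_d) x, differentiable (pder i f) x) /\
  (forall i j : 'I_d, exists L : R, forall x y,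
      `| pder j (pder i f) x - pder j (pder i f) y | <= L * enorm (x - y)).

Definition supnorm {R : realType} {d : nat} (U : 'rV[R]_d -> 'rV[R]_d) : R :=
  sup (range (fun x => enorm (U x))).

(* the measurable space of R^d used for measures: d.-tuple R with the
   product (coordinate) sigma-algebra *)
Definition tup2rv {R : realType} {d : nat} (y : d.-tuple R) : 'rV[R]_d :=
  \row_i tnth y i.

Definition conv_grad {R : realType} {d : nat} (W : 'rV[R]_d -> R)
  (rho : probability (d.-tuple R) R) (x : 'rV[R]_d) : 'rV[R]_d :=
  \row_i Rintegral rho setT (fun y => pder i W (x - tup2rv y)).

Definition lagr {R : realType} {d : nat} (V W : 'rV[R]_d -> R)
  (rho : R -> probability (d.-tuple R) R) (p x : 'rV[R]_d) (s : R) : R :=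
  4^-1 * enorm (p + grad V x + conv_grad W (rho s) x) ^+ 2.

Definition AC2_with_deriv {R : realType} {d : nat} (t h : R)
  (gamma g : R -> 'rV[R]_d) : Prop :=
  forall i : 'I_d,
    (@lebesgue_measure R).-integrable `[t, t + h] (fun s => (g s ord0 i)%:E) /\
    (@lebesgue_measure R).-integrable `[t, t + h] (fun s => (g s ord0 i ^+ 2)%:E) /\
    (forall s, t <= s <= t + h ->
       gamma s ord0 i = gamma t ord0 i +
         Rintegral (@lebesgue_measure R) `[t, s] (fun r => g r ord0 i)).

(* cost D_rho(x, y; t, h): infimum of the action over AC_2 curves in T^d
   from [x] to [y] (lifted to R^d: gamma t = x, gamma (t+h) = y mod Z^d) *)
Definition cost {R : realType} {d : nat} (V W : 'rV[R]_d -> R)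
  (rho : R -> probability (d.-tuple R) R) (x y : 'rV[R]_d) (t h : R) : \bar R :=
  ereal_inf [set a : \bar R | exists (gamma g : R -> 'rV[R]_d),
     [/\ AC2_with_deriv t h gamma g, gamma t = x, int_vec (gamma (t + h) - y) &
        a = (\int[@lebesgue_measure R]_(s in `[t, (t + h)%R])
               (lagr V W rho (g s) (gamma s) s)%:E)%E]].

From HB Require Import structures.
From mathcomp Require Import all_boot all_order all_algebra.
From mathcomp Require Import all_classical all_reals all_analysis.
From mathcomp Require Import ring lra.
Import Order.TTheory GRing.Theory Num.Theory.
Import numFieldNormedType.Exports.
Local Open Scope classical_set_scope.
Local Open Scope ring_scope.

(* Travel at constant velocity (y + k - x) / h from x to a lift y + k of y,
   with k in Z^d.  The drift grad V + grad W * rho_s has norm at most B (for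
   the convolution, by Jensen's inequality for the probability rho_s), so along
   this path the Lagrangian is at most (|x - y - k| / h + B)^2 / 4, and its
   integral over [t, t + h] is the claimed square with |x - y - k| in place of
   d(x, y).  Optimising over k gives the flat distance on the torus. *)

Section euclidean.
Context {R : realType} {d : nat}.
Implicit Types (a b : 'rV[R]_d) (c : R).

Definition vdot a b : R := \sum_(i < d) a ord0 i * b ord0 i.

Lemma enorm_ge0 a : 0 <= enorm a.
Proof. exact: sqrtr_ge0. Qed.

Lemma enorm_sqr a : enorm a ^+ 2 = vdot a a.
Proof.
rewrite sqr_sqrtr; last by apply: sumr_ge0 => i _; exact: sqr_ge0.
by apply: eq_bigr => i _; rewrite expr2.
Qed.

Lemma enorm_eq0 a : (enorm a == 0) = (a == 0).
Proof.
apply/idP/eqP => [|->]; last first.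
  by rewrite /enorm big1 ?sqrtr0 // => i _; rewrite mxE expr0n.
rewrite sqrtr_eq0 => a0; apply/rowP => i; rewrite mxE.
have sum0 : \sum_(j < d) a ord0 j ^+ 2 = 0.
  by apply/eqP; rewrite eq_le a0 sumr_ge0 // => j _; exact: sqr_ge0.
by apply/eqP; rewrite -sqrf_eq0 (psumr_eq0P (fun j _ => sqr_ge0 (a ord0 j)) sum0).
Qed.

Lemma enormZ c a : enorm (c *: a) = `|c| * enorm a.
Proof.
rewrite /enorm -sqrtr_sqr -sqrtrM ?sqr_ge0 // mulr_sumr.
by congr Num.sqrt; apply: eq_bigr => i _; rewrite mxE exprMn.
Qed.

Lemma enorm_coord a i : `|a ord0 i| <= enorm a.
Proof.
rewrite /enorm -sqrtr_sqr ler_wsqrtr // (bigD1 i) //= lerDl.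
by apply: sumr_ge0 => j _; exact: sqr_ge0.
Qed.

Lemma vdot0l b : vdot 0 b = 0.
Proof. by rewrite /vdot big1 // => i _; rewrite mxE mul0r. Qed.

Lemma vdotC a b : vdot a b = vdot b a.
Proof. by apply: eq_bigr => i _; rewrite mulrC. Qed.

Lemma vdot_le_AMGM a b c : 0 < c ->
  2 * vdot a b <= c * enorm a ^+ 2 + c^-1 * enorm b ^+ 2.
Proof.
move=> c0; rewrite !enorm_sqr /vdot !mulr_sumr -big_split /=.
apply: ler_sum => i _; set u := a ord0 i; set v := b ord0 i.
rewrite -(ler_pM2r c0).
have -> : (c * u ^+ 2 + c^-1 * v ^+ 2) * c = (c * u) ^+ 2 + v ^+ 2.
  by field; rewrite gt_eqF.
have := sqr_ge0 (c * u - v); nra.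
Qed.

Lemma vdot_le a b : vdot a b <= enorm a * enorm b.
Proof.
have [->|a0] := eqVneq a 0; first by rewrite vdot0l mulr_ge0 ?enorm_ge0.
have [->|b0] := eqVneq b 0; first by rewrite vdotC vdot0l mulr_ge0 ?enorm_ge0.
have pa : 0 < enorm a by rewrite lt_def enorm_eq0 a0 enorm_ge0.
have pb : 0 < enorm b by rewrite lt_def enorm_eq0 b0 enorm_ge0.
have := vdot_le_AMGM a b _ (divr_gt0 pb pa).
have -> : enorm b / enorm a * enorm a ^+ 2 + (enorm b / enorm a)^-1 * enorm b ^+ 2
   = 2 * (enorm a * enorm b) by field; rewrite !gt_eqF.
by rewrite ler_pM2l.
Qed.

Lemma enorm_sqrD a b :
  enorm (a + b) ^+ 2 = enorm a ^+ 2 + 2 * vdot a b + enorm b ^+ 2.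
Proof.
rewrite !enorm_sqr /vdot mulr_sumr -!big_split /=.
by apply: eq_bigr => i _; rewrite mxE; ring.
Qed.

Lemma enormD a b : enorm (a + b) <= enorm a + enorm b.
Proof.
rewrite -ler_sqr ?nnegrE ?addr_ge0 ?enorm_ge0 // enorm_sqrD sqrrD.
have := vdot_le a b; lra.
Qed.

End euclidean.

Section periodic.
Context {R : realType} {d : nat}.
Implicit Types f g : 'rV[R]_d -> R.

Lemma pder_zperiodic f i : zperiodic f -> zperiodic (pder i f).
Proof.
move=> fP x k kZ; rewrite /pder /derive /=.
suff -> : (fun h : R => h^-1 *: (f (h *: ev i + (x + k)) - f (x + k))) =
  (fun h => h^-1 *: (f (h *: ev i + x) - f x)) by [].
by apply: boolp.funext => h; rewrite addrA !(fP _ _ kZ).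
Qed.

Lemma continuous_pder f i : C21 f -> continuous (pder i f).
Proof. by move=> [_ [df _]] x; exact: differentiable_continuous. Qed.

Definition unit_cube : set 'rV[R]_d := [set v | forall i, `[0, 1]%classic (v ord0 i)].

Lemma compact_unit_cube : compact unit_cube.
Proof. exact: (rV_compact (fun=> @segment_compact R 0 1)). Qed.

Lemma int_shift_unit_cube x : exists2 k : 'rV[R]_d, int_vec k & unit_cube (x - k).
Proof.
exists (\row_i (Num.floor (x ord0 i))%:~R) => i; first by rewrite mxE intr_int.
rewrite !mxE /= in_itv /= subr_ge0 lerBlDl.
have /andP[xi_ge xi_lt] := floor_itv (x ord0 i).
by rewrite xi_ge /= -[1]/(1%:~R) -intrD ltW.
Qed.

Lemma zperiodic_bounded g : continuous g -> zperiodic g ->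
  exists M, forall x, `|g x| <= M.
Proof.
move=> gC gP.
have [M [_ gM]] := compact_bounded
  (continuous_compact (continuous_subspaceT gC) compact_unit_cube).
exists (M + 1) => x; have [k kZ cube_xk] := int_shift_unit_cube x.
rewrite -(subrK k x) gP //; apply: (gM (M + 1)); first by rewrite ltrDl.
by exists (x - k).
Qed.

Lemma grad_bounded f : C21 f -> zperiodic f ->
  has_ubound (range (fun x => enorm (grad f x))).
Proof.
move=> fC fP.
have /boolp.choice[M fM] : forall i, exists M, forall x, `|pder i f x| <= M.
  move=> i; apply: zperiodic_bounded; first exact: continuous_pder.
  exact: pder_zperiodic.
exists (Num.sqrt (\sum_(i < d) M i ^+ 2)) => _ [x _ <-].
apply: ler_wsqrtr; apply: ler_sum => i _; rewrite mxE -real_normK ?num_real //.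
by apply: lerXn2r; rewrite ?nnegrE ?(le_trans _ (fM i x)).
Qed.

Lemma enorm_grad_le_supnorm f x : C21 f -> zperiodic f ->
  enorm (grad f x) <= supnorm (grad f).
Proof. by move=> fC fP; apply: ub_le_sup; [exact: grad_bounded | exists x]. Qed.

Lemma supnorm_grad_ge0 f : C21 f -> zperiodic f -> 0 <= supnorm (grad f).
Proof.
by move=> fC fP; apply: le_trans (enorm_grad_le_supnorm f 0 fC fP); exact: enorm_ge0.
Qed.

End periodic.

Section tuple_measurability.
Context {R : realType} {d : nat}.

Definition rat_box (u : {ffun 'I_d -> rat * rat}) : set (d.-tuple R) :=
  [set y | forall i, ratr (u i).1 < tnth y i < ratr (u i).2].

Lemma measurable_rat_box u : measurable (rat_box u).
Proof.
have -> : rat_box u = \bigcap_(i in [set: 'I_d])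
    ((@tnth d R)^~ i @^-1` `](ratr (u i).1), (ratr (u i).2)[%classic).
  by apply/seteqP; split=> y /= yu i => [_|]; rewrite ?in_itv /=; apply: yu.
apply: fin_bigcap_measurable => [|i _]; first exact: finite_finset.
by rewrite -[X in measurable X]setTI; exact: measurable_tnth.
Qed.

Lemma rat_box_around (y : d.-tuple R) e : 0 < e -> exists u, rat_box u y /\
  rat_box u `<=` [set w | forall i, `|tnth y i - tnth w i| < e].
Proof.
move=> e0; have /boolp.choice[q qP] : forall i, exists q : rat * rat,
    tnth y i - e < ratr q.1 < tnth y i /\ tnth y i < ratr q.2 < tnth y i + e.
  move=> i; have below : tnth y i - e < tnth y i by rewrite gtrBl.
  have above : tnth y i < tnth y i + e by rewrite ltrDl.
  have [[q1 q1P] [q2 q2P]] := (rat_in_itvoo below, rat_in_itvoo above).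
  by exists (q1, q2); move: q1P q2P; rewrite !in_itv.
exists [ffun i => q i]; split=> [i|w wq i]; have [/andP[? ?] /andP[? ?]] := qP i.
  by rewrite ffunE; apply/andP.
have /andP[] := wq i; rewrite ffunE => ? ?; rewrite ltr_norml; apply/andP; split; lra.
Qed.

(* The preimage is the countable union of the rational boxes it contains. *)
Lemma open_preimage_tup2rv_measurable (A : set 'rV[R]_d) : open A ->
  measurable (tup2rv @^-1` A).
Proof.
move=> Aop; pose F u := if pselect (rat_box u `<=` tup2rv @^-1` A)
  then rat_box u else set0.
suff -> : tup2rv @^-1` A = \bigcup_u F u.
  apply: countable_bigcupT_measurable => [|u]; first exact: countableP.
  by rewrite /F; case: pselect => ?; [exact: measurable_rat_box | exact: measurable0].
apply/seteqP; split => [y Ay|y [u _]]; last first.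
  by rewrite /F; case: pselect => // sub /sub.
have /nbhs_ballP[e e0 eA] : nbhs (tup2rv y) A by exact: open_nbhs_nbhs.
have [u [yu uy]] := rat_box_around y e e0.
exists u => //; rewrite /F; case: pselect => // -[] w /uy wy.
apply: eA; rewrite -ball_normE /ball_ /=.
have -> : `|tup2rv y - tup2rv w| = mx_norm (tup2rv y - tup2rv w) by [].
rewrite mx_normrE; apply: bigmax_lt => // -[i j] _ /=; rewrite (ord1 i) !mxE; exact: wy.
Qed.

Lemma measurable_fun_tup2rv (g : 'rV[R]_d -> R) : continuous g ->
  measurable_fun [set: d.-tuple R] (g \o tup2rv).
Proof.
move=> gC; apply: (measurability _ (measurable_realfun.RGenOpens.measurableE R)).
move=> _ [_ [a [b ->]] <-]; rewrite setTI comp_preimage.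
apply: open_preimage_tup2rv_measurable.
by apply: open_comp; [move=> x _; exact: gC | exact: interval_open].
Qed.

End tuple_measurability.

Section mean_vector.
Context {R : realType} {d : nat} {dT : measure_display} {T : measurableType dT}.
Variable mu : probability T R.

(* |c|^2 = \int <c, F> <= |c| S for the mean c of F. *)
Lemma enorm_mean_le (F : T -> 'rV[R]_d) S :
  (forall i, measurable_fun [set: T] (fun y => F y ord0 i)) ->
  (forall y, enorm (F y) <= S) ->
  enorm (\row_i \int[mu]_(y in [set: T]) F y ord0 i) <= S.
Proof.
move=> Fm FS; set c := \row_i _.
(* [rewrite mu1] does not match the occurrences of [mu] that come through its
   measure structure; these are first restated as [mu [set: T]]. *)
have mu1 : mu [set: T] = 1%E by exact: probability_setT.
have [y0 _] : [set: T] !=set0.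
  apply/set0P/negP => /eqP T0; move: mu1.
  by rewrite T0 measure0 => -[] /eqP; rewrite eq_sym oner_eq0.
have S0 : 0 <= S := le_trans (enorm_ge0 _) (FS y0).
have Fi i : mu.-integrable [set: T] (EFin \o (fun y => F y ord0 i)).
  apply: measurable_bounded_integrable => //.
    by rewrite -[X in (X < _)%E]/(mu [set: T]) mu1 ltry.
  exists S; split; first exact: num_real.
  move=> M SM y _; apply: le_trans (enorm_coord (F y) i) _.
  exact: le_trans (FS y) (ltW SM).
have cE i : (c ord0 i)%:E = (\int[mu]_y (F y ord0 i)%:E)%E.
  by rewrite mxE fineK //; exact: (integrable_fin_num measurableT (Fi i)).
have cFi i : mu.-integrable [set: T] (fun y => (c ord0 i)%:E * (F y ord0 i)%:E)%E.
  exact: (integrableZl measurableT (c ord0 i) (Fi i)).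
have : ((enorm c ^+ 2)%:E <= (enorm c * S)%:E)%E.
  rewrite enorm_sqr /vdot -sumEFin.
  have -> : (\sum_(i < d) (c ord0 i * c ord0 i)%:E =
      \sum_(i < d) \int[mu]_y ((c ord0 i)%:E * (F y ord0 i)%:E))%E.
    by apply: eq_bigr => i _; rewrite (integralZl measurableT (Fi i)) -cE.
  rewrite -integral_sum //.
  apply: le_trans (_ : (\int[mu]_y (enorm c * S)%:E <= _)%E).
    apply: le_integral => //; first exact: integrable_sum.
      exact: finite_measure_integrable_cst.
    move=> y _; rewrite sumEFin lee_fin.
    by apply: le_trans (vdot_le c (F y)) _; rewrite ler_wpM2l ?enorm_ge0.
  by rewrite integral_cst // -[X in (_ * X)%E]/(mu [set: T]) mu1 mule1.
rewrite lee_fin expr2; have [->|c0] := eqVneq (enorm c) 0; first by [].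
by rewrite ler_pM2l // lt_def c0 enorm_ge0.
Qed.

End mean_vector.

Lemma enorm_conv_grad_le {R : realType} {d : nat} (W : 'rV[R]_d -> R)
    (mu : probability (d.-tuple R) R) x :
  C21 W -> zperiodic W -> enorm (conv_grad W mu x) <= supnorm (grad W).
Proof.
move=> WC WP; have := @enorm_mean_le _ _ _ _ mu (fun y => grad W (x - tup2rv y)).
have -> : \row_i \int[mu]_(y in [set: d.-tuple R]) grad W (x - tup2rv y) ord0 i
    = conv_grad W mu x.
  by apply/rowP => i; rewrite !mxE; apply: eq_Rintegral => y _; rewrite mxE.
apply=> [i|y]; last exact: enorm_grad_le_supnorm.
under eq_fun => y do rewrite mxE.
apply: (measurable_fun_tup2rv (fun z => pder i W (x - z))).
have subx : continuous (fun z : 'rV[R]_d => x - z).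
  move=> z; apply: (@continuousB _ _ _ (cst x) id); first exact: cst_continuous.
  exact: cvg_id.
by move=> z; apply: continuous_comp; [exact: subx | exact: continuous_pder].
Qed.

(* Needed because s |-> rho s is an arbitrary family, so the Lagrangian along
   a path need not be measurable in time.  The integral of a nonnegative
   function is a supremum over its simple minorants, which is monotone
   without any measurability. *)
Lemma ge0_le_integral_nonmeasurable {dT : measure_display}
    {T : measurableType dT} {R : realType} (mu : {measure set T -> \bar R})
    (D : set T) (f g : T -> \bar R) :
  (forall x, D x -> 0 <= f x)%E -> (forall x, D x -> f x <= g x)%E ->
  (\int[mu]_(x in D) f x <= \int[mu]_(x in D) g x)%E.
Proof.
move=> f0 fg; have g0 x : D x -> (0 <= g x)%E.
  by move=> Dx; exact: le_trans (f0 x Dx) (fg x Dx).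
rewrite !ge0_integralE //; apply: ereal_sup_le => _ [u uf <-]; exists u => //= x.
by apply: le_trans (uf x) _; rewrite /patch; case: ifPn => // /set_mem /fg.
Qed.

Lemma AC2_affine {R : realType} {d : nat} (t h : R) (x c : 'rV[R]_d) :
  AC2_with_deriv t h (fun s => x + (s - t) *: c) (fun=> c).
Proof.
have cst_int r : (@lebesgue_measure R).-integrable `[t, t + h] (fun=> r%:E).
  have := @continuous_compact_integrable R (cst r) _ (@segment_compact R t (t + h)).
  by apply; apply: continuous_subspaceT => z; exact: cst_continuous.
move=> i; split; [exact: cst_int | split; first exact: cst_int].
move=> s /andP[ts _]; rewrite Rintegral_cst //.
have := @lebesgue_measure_itv R `[t, s]; rewrite /= => ->; rewrite lte_fin.
rewrite !mxE subrr mul0r addr0; move: ts; rewrite le_eqVlt => /predU1P[<-|lt_ts].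
  by rewrite ltxx mulr0 subrr mul0r addr0.
by rewrite lt_ts -EFinD /= mulrC.
Qed.

Section cost_bound.
Context {R : realType} {d : nat} {V W : 'rV[R]_d -> R}.
Hypotheses (hV : C21 V) (hVp : zperiodic V) (hW : C21 W) (hWp : zperiodic W).
Variable rho : R -> probability (d.-tuple R) R.

Let B := supnorm (grad V) + supnorm (grad W).

Lemma lagr_le p z s : lagr V W rho p z s <= 4^-1 * (enorm p + B) ^+ 2.
Proof.
rewrite /lagr ler_wpM2l ?invr_ge0 // ler_sqr ?nnegrE ?enorm_ge0 //.
  apply: le_trans (enormD _ _) _; apply: le_trans (lerD (enormD _ _) (lexx _)) _.
  rewrite -addrA lerD2l; apply: lerD; first exact: enorm_grad_le_supnorm.
  exact: enorm_conv_grad_le.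
by rewrite addr_ge0 ?enorm_ge0 // addr_ge0 // supnorm_grad_ge0.
Qed.

Lemma cost_le_line (x y c : 'rV[R]_d) t h :
  0 < h -> int_vec (x + h *: c - y) ->
  (cost V W rho x y t h <= (h * (4^-1 * (enorm c + B) ^+ 2))%:E)%E.
Proof.
move=> h0 ends; set M := 4^-1 * _.
apply: le_trans (_ : \int[@lebesgue_measure R]_(s in `[t, (t + h)%R])
    (lagr V W rho c (x + (s - t) *: c) s)%:E <= _)%E.
  apply: ereal_inf_lbound; exists (fun s => x + (s - t) *: c), (fun=> c); split.
  - exact: AC2_affine.
  - by rewrite /= subrr scale0r addr0.
  - by rewrite [t + h]addrC addrK.
  - by [].
apply: le_trans (ge0_le_integral_nonmeasurable _ _ _ (fun=> M%:E) _ _) _.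
- by move=> s _; rewrite lee_fin /lagr mulr_ge0 ?invr_ge0 ?sqr_ge0.
- by move=> s _; rewrite lee_fin lagr_le.
rewrite integral_cst //.
have := @lebesgue_measure_itv R `[t, t + h]; rewrite /= => ->.
by rewrite lte_fin ltrDl h0 -EFinB -EFinM addrAC subrr add0r mulrC.
Qed.

Lemma cost_le_shift (x y k : 'rV[R]_d) t h : 0 < h -> int_vec k ->
  (cost V W rho x y t h <=
    ((enorm (x - y - k) / (2 * Num.sqrt h) + 2^-1 * Num.sqrt h * B) ^+ 2)%:E)%E.
Proof.
move=> h0 kZ; set v := x - y - k.
have ends : x + h *: (- h^-1 *: v) - y = k.
  rewrite scalerA mulrN mulfV ?gt_eqF // scaleN1r /v.
  by apply/rowP => i; rewrite !mxE; ring.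
apply: le_trans (cost_le_line x y (- h^-1 *: v) t h h0 _) _; first by rewrite ends.
rewrite enormZ normrN ger0_norm ?invr_ge0 ?(ltW h0) //.
have s0 : 0 < Num.sqrt h by rewrite sqrtr_gt0.
set s := Num.sqrt h in s0 *; have hE : h = s ^+ 2 by rewrite sqr_sqrtr // ltW.
suff -> : h * (4^-1 * (h^-1 * enorm v + B) ^+ 2) =
    (enorm v / (2 * s) + 2^-1 * s * B) ^+ 2 by [].
by rewrite hE; field; rewrite gt_eqF.
Qed.

Lemma cost_le_lift_dist (x y k : 'rV[R]_d) t h r :
  0 < h -> int_vec k -> enorm (x - y - k) <= r ->
  (cost V W rho x y t h <=
    ((r / (2 * Num.sqrt h) + 2^-1 * Num.sqrt h * B) ^+ 2)%:E)%E.
Proof.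
move=> h0 kZ kr; apply: le_trans (cost_le_shift x y k t h h0 kZ) _.
have s0 : 0 < 2 * Num.sqrt h by rewrite mulr_gt0 ?sqrtr_gt0.
have B0 : 0 <= B by rewrite addr_ge0 ?supnorm_grad_ge0.
have bound_ge0 q : 0 <= q -> 0 <= q / (2 * Num.sqrt h) + 2^-1 * Num.sqrt h * B.
  by move=> q0; rewrite addr_ge0 ?mulr_ge0 ?invr_ge0 ?sqrtr_ge0 ?(ltW s0).
rewrite lee_fin; apply: lerXn2r; rewrite ?nnegrE ?bound_ge0 ?enorm_ge0 //.
  exact: le_trans (enorm_ge0 _) kr.
by rewrite lerD2r ler_pM2r ?invr_gt0.
Qed.

End cost_bound.

Lemma lee_sqr_of_lee_sqrD {R : realType} (z : \bar R) (a : R) :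
  (forall e, 0 < e -> (z <= ((a + e) ^+ 2)%:E)%E) -> (z <= (a ^+ 2)%:E)%E.
Proof.
move=> za; apply/lee_addgt0Pr => e e0.
have a_lt : a < Num.sqrt (a ^+ 2 + e).
  apply: le_lt_trans (ler_norm a) _.
  by rewrite -sqrtr_sqr ltr_sqrt ?ltrDl // ltr_wpDl ?sqr_ge0.
have := za (Num.sqrt (a ^+ 2 + e) - a); rewrite subr_gt0 => /(_ a_lt).
by rewrite addrC subrK sqr_sqrtr ?EFinD // addr_ge0 ?sqr_ge0 ?(ltW e0).
Qed.

Lemma torus_dist_approx {R : realType} {d : nat} (x y : 'rV[R]_d) e : 0 < e ->
  exists2 k, int_vec k & enorm (x - y - k) < torus_dist x y + e.
Proof.
move=> e0; set E := [set enorm (x - y - k) | k in int_vec].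
have E0 : E (enorm (x - y - 0)) by exists 0 => // i; rewrite mxE.
have E_lb : lbound E 0 by move=> _ [k _ <-]; exact: enorm_ge0.
have [_ [k kZ <-] ke] := inf_adherent e0 (conj (ex_intro _ _ E0) (ex_intro _ 0 E_lb)).
by exists k.
Qed.

Theorem mainTheorem9 (R : realType) (d : nat) (V W : 'rV[R]_d -> R)
  (hV : C21 V) (hVp : zperiodic V) (hW : C21 W) (hWp : zperiodic W)
  (rho : R -> probability (d.-tuple R) R)
  (x y : 'rV[R]_d) (t h : R) (ht : 0 < t) (hh : 0 < h) :
  let B := supnorm (grad V) + supnorm (grad W) in
  (cost V W rho x y t h <=
     ((torus_dist x y / (2 * Num.sqrt h) + 2^-1 * Num.sqrt h * B) ^+ 2)%:E)%E.
Proof.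
cbv zeta; apply: lee_sqr_of_lee_sqrD => e e0.
have s0 : 0 < 2 * Num.sqrt h by rewrite mulr_gt0 ?sqrtr_gt0.
have [k kZ /ltW k_near] := torus_dist_approx x y _ (mulr_gt0 e0 s0).
apply: le_trans (cost_le_lift_dist hV hVp hW hWp rho x y k t h _ hh kZ k_near) _.
by rewrite mulrDl mulfK ?gt_eqF // addrAC.
Qed.
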